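(* Let $N\geq2$. For all integers $n,m$ such that none of $n+m$, $n-m$ is divisible by $2N$, $$[H^0_n,H^0_m]=2\sin\!\Bigl(\pi\tfrac{n-m}{2N}\Bigr)H^1_{n+m}+2\sin\!\Bigl(\pi\tfrac{n+m}{2N}\Bigr)H^1_{n-m}.$$
   Context: On $\mathcal{H}_N=(\mathbb{C}^2)^{\otimes N}$ let $c_j^\dagger=i^{j-1}\,i^{\sigma^z_1+\dots+\sigma^z_{j-1}}\sigma^+_j$, $c_j=i^{-j+1}\,i^{-\sigma^z_1-\dots-\sigma^z_{j-1}}\sigma^-_j$ (Jordan–Wigner fermions; $\sigma^a_j$ Pauli matrices on site $j$, $\sigma^\pm$ the raising/lowering matrices), and $e_j=c_jc_{j+1}^\dagger+c_{j+1}c_j^\dagger+i(c_j^\dagger c_j-c_{j+1}^\dagger c_{j+1})$, $1\leq j\leq N-1$. For $n\in\mathbb{Z}$ set $H^0_n=\sum_{j=1}^{N-1}\cos(\pi nj/N)\,e_j$, and for $k\in\mathbb{Z}$ not divisible by $2N$ define $H^1_k$ by $[H^0_0,H^0_k]=-4\sin(\pi\tfrac{k}{2N})H^1_k$. *)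

(* Complex numbers are implemented here as pairs of reals; operators on
   H_N = (C^2)^{(x)N} are 2^N x 2^N complex matrices, given entrywise on the
   computational basis, whose elements are labelled by x in [0, 2^N):
   the spin at site j (1 <= j <= N) is bit (j-1) of x, with bit false = e_0
   = "up" (sigma^z = +1) and bit true = e_1 = "down" (sigma^z = -1). *)
From Stdlib Require Import Reals ZArith Arith List Bool.
Open Scope R_scope.

Definition C : Type := (R * R)%type.
Definition RtoC (r : R) : C := (r, 0).
Definition C0 : C := (0, 0).
Definition C1 : C := (1, 0).
Definition Ci : C := (0, 1).
Definition Cadd (a b : C) : C := (fst a + fst b, snd a + snd b).
Definition Copp (a : C) : C := (- fst a, - snd a).
Definition Cmul (a b : C) : C :=
  (fst a * fst b - snd a * snd b, fst a * snd b + snd a * fst b).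
Fixpoint Cpow (a : C) (n : nat) : C :=
  match n with O => C1 | S k => Cmul a (Cpow a k) end.
Fixpoint Csum (n : nat) (f : nat -> C) : C :=
  match n with O => C0 | S k => Cadd (Csum k f) (f k) end.

Definition Op : Type := nat -> nat -> C.
Definition Opzero : Op := fun _ _ => C0.
Definition Opid : Op := fun x y => if Nat.eqb x y then C1 else C0.
Definition Opadd (A B : Op) : Op := fun x y => Cadd (A x y) (B x y).
Definition Opsub (A B : Op) : Op := fun x y => Cadd (A x y) (Copp (B x y)).
Definition Opscale (c : C) (A : Op) : Op := fun x y => Cmul c (A x y).
Definition Opmul (N : nat) (A B : Op) : Op :=
  fun x y => Csum (2 ^ N) (fun k => Cmul (A x k) (B k y)).
Definition comm (N : nat) (A B : Op) : Op := Opsub (Opmul N A B) (Opmul N B A).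
Fixpoint Opsum (n : nat) (F : nat -> Op) : Op :=
  match n with O => Opzero | S k => Opadd (Opsum k F) (F k) end.

(* 2x2 matrices, indexed by (row bit, column bit) *)
Definition Mat2 : Type := bool -> bool -> C.
(* sigma^+ = [[0,1],[0,0]] : e_1 |-> e_0 ;  sigma^- = [[0,0],[1,0]] *)
Definition sigma_plus : Mat2 := fun b c => if negb b && c then C1 else C0.
Definition sigma_minus : Mat2 := fun b c => if b && negb c then C1 else C0.
(* i^{sigma^z} = diag(i^1, i^{-1}) = diag(i, -i),
   i^{-sigma^z} = diag(i^{-1}, i) = diag(-i, i) *)
Definition i_pow_sz : Mat2 :=
  fun b c => if Bool.eqb b c then (if b then Copp Ci else Ci) else C0.
Definition i_pow_msz : Mat2 :=
  fun b c => if Bool.eqb b c then (if b then Ci else Copp Ci) else C0.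

(* the operator M acting on site j (1 <= j <= N), identity elsewhere *)
Definition agree_off (N j x y : nat) : bool :=
  forallb (fun k => Nat.eqb k (j - 1) ||
                    Bool.eqb (Nat.testbit x k) (Nat.testbit y k)) (seq 0 N).
Definition site (N j : nat) (M : Mat2) : Op :=
  fun x y => if agree_off N j x y
             then M (Nat.testbit x (j - 1)) (Nat.testbit y (j - 1)) else C0.

Fixpoint prod_sites (N : nat) (M : Mat2) (k : nat) : Op :=
  match k with
  | O => Opid
  | S k' => Opmul N (prod_sites N M k') (site N (S k') M)
  end.

(* c_j^dag = i^{j-1} i^{sz_1+...+sz_{j-1}} sigma^+_j *)
Definition cdag (N j : nat) : Op :=
  Opscale (Cpow Ci (j - 1))
          (Opmul N (prod_sites N i_pow_sz (j - 1)) (site N j sigma_plus)).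
(* c_j = i^{-j+1} i^{-sz_1-...-sz_{j-1}} sigma^-_j, with i^{-1} = -i *)
Definition cann (N j : nat) : Op :=
  Opscale (Cpow (Copp Ci) (j - 1))
          (Opmul N (prod_sites N i_pow_msz (j - 1)) (site N j sigma_minus)).

Definition e_op (N j : nat) : Op :=
  Opadd (Opadd (Opmul N (cann N j) (cdag N (j + 1)))
               (Opmul N (cann N (j + 1)) (cdag N j)))
        (Opscale Ci (Opsub (Opmul N (cdag N j) (cann N j))
                           (Opmul N (cdag N (j + 1)) (cann N (j + 1))))).

Definition H0 (N : nat) (n : Z) : Op :=
  Opsum (N - 1) (fun i =>
    Opscale (RtoC (cos (PI * IZR n * INR (S i) / INR N))) (e_op N (S i))).

(* H^1_k defined by [H^0_0, H^0_k] = -4 sin(pi k/(2N)) H^1_k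
   (meaningful for k not divisible by 2N, where the sine is nonzero) *)
Definition H1 (N : nat) (k : Z) : Op :=
  Opscale (RtoC (- / (4 * sin (PI * IZR k / (2 * INR N)))))
          (comm N (H0 N 0) (H0 N k)).

From Pilot Require Import Defs.

(* Every operator in sight is monomial in the computational basis: it sends a
   basis vector to a multiple of a single basis vector.  Tracking these
   permutations and coefficients shows that the bond operator e_(i+1) is a
   hopping term, flipping the two spins of its bond with coefficient -1 when
   they differ, plus the density term i (n_(i+1) - n_(i+2)); the Jordan-Wigner
   strings cancel.  Hence bond operators on disjoint bonds commute (locality).

   Expanding bilinearly, [H^0_n, H^0_m] = sum_(a,b) cos_n(a) cos_m(b) [e_a, e_b],
   and by locality and antisymmetry only neighbouring bonds survive:
   [H^0_n, H^0_m] = sum_a (cos_n(a) cos_m(a+1) - cos_n(a+1) cos_m(a)) [e_a, e_(a+1)].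
   The same formula describes H^1_k through its definition with n = 0, so the
   theorem reduces, bond by bond, to a trigonometric identity between these
   coefficients, valid as soon as sin(pi (n +- m) / 2N) <> 0, i.e. as soon as
   2N divides neither n + m nor n - m. *)
From Stdlib Require Import Reals ZArith Arith.
Open Scope R_scope.
From Stdlib Require Import Lia Lra Bool List.
(* Re-import the definitions so that [C] denotes complex numbers, not the
   binomial coefficient of [Reals]. *)
Import Defs.

Lemma C_ext (a b : C) : fst a = fst b -> snd a = snd b -> a = b.
Proof. destruct a, b; simpl; intros; subst; reflexivity. Qed.

Definition Csub (a b : C) : C := Cadd a (Copp b).

Lemma C_ring_theory : ring_theory C0 C1 Cadd Cmul Csub Copp (@eq C).
Proof.
  constructor; intros; try reflexivity;
    apply C_ext; unfold Cadd, Cmul, Copp, C0, C1; simpl; ring.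
Qed.
Add Ring C_ring : C_ring_theory.

Lemma Ci_squared : Cmul Ci Ci = Copp C1.
Proof. apply C_ext; unfold Cmul, Ci, Copp, C1; simpl; ring. Qed.

Lemma RtoC_plus (a b : R) : RtoC (a + b) = Cadd (RtoC a) (RtoC b).
Proof. apply C_ext; unfold RtoC, Cadd; simpl; ring. Qed.

Lemma RtoC_mult (a b : R) : RtoC (a * b) = Cmul (RtoC a) (RtoC b).
Proof. apply C_ext; unfold RtoC, Cmul; simpl; ring. Qed.

Lemma Ci_pow_inverse (k : nat) : Cmul (Cpow (Copp Ci) k) (Cpow Ci k) = C1.
Proof.
  induction k as [|k IH]; cbn [Cpow]; [ring|].
  transitivity (Cmul (Cmul (Cpow (Copp Ci) k) (Cpow Ci k)) (Copp (Cmul Ci Ci))); [ring|].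
  rewrite IH, Ci_squared; ring.
Qed.

Lemma Csum_ext (n : nat) (f g : nat -> C) :
  (forall i, (i < n)%nat -> f i = g i) -> Csum n f = Csum n g.
Proof. induction n as [|n IH]; intros Hfg; cbn [Csum]; auto. rewrite IH, Hfg; auto. Qed.

Lemma Csum_add (n : nat) (f g : nat -> C) :
  Csum n (fun i => Cadd (f i) (g i)) = Cadd (Csum n f) (Csum n g).
Proof. induction n as [|n IH]; cbn [Csum]; [ring|]. rewrite IH; ring. Qed.

Lemma Csum_scal (n : nat) (c : C) (f : nat -> C) :
  Csum n (fun i => Cmul c (f i)) = Cmul c (Csum n f).
Proof. induction n as [|n IH]; cbn [Csum]; [ring|]. rewrite IH; ring. Qed.

Lemma Csum_opp (n : nat) (f : nat -> C) :
  Copp (Csum n f) = Csum n (fun i => Copp (f i)).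
Proof. induction n as [|n IH]; cbn [Csum]; [ring|]. rewrite <- IH; ring. Qed.

Lemma Csum_zero (n : nat) (f : nat -> C) :
  (forall i, (i < n)%nat -> f i = C0) -> Csum n f = C0.
Proof. induction n as [|n IH]; intros Hf; cbn [Csum]; auto. rewrite IH, Hf; auto; ring. Qed.

Lemma Csum_single (n : nat) (f : nat -> C) (i0 : nat) : (i0 < n)%nat ->
  (forall i, (i < n)%nat -> i <> i0 -> f i = C0) -> Csum n f = f i0.
Proof.
  induction n as [|n IH]; intros Hi0 Hf; [lia|]. cbn [Csum].
  destruct (Nat.eq_dec i0 n) as [->|Hne].
  - rewrite Csum_zero by (intros; apply Hf; lia). ring.
  - rewrite IH, (Hf n) by (lia || (intros; apply Hf; lia)). ring.
Qed.

Lemma Csum_swap (n m : nat) (F : nat -> nat -> C) :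
  Csum n (fun a => Csum m (fun b => F a b)) = Csum m (fun b => Csum n (fun a => F a b)).
Proof.
  induction n as [|n IH]; cbn [Csum].
  - rewrite Csum_zero; auto.
  - rewrite IH, <- Csum_add. reflexivity.
Qed.

Lemma Opmul_add_l (N : nat) (A A' B : Op) (x y : nat) :
  Opmul N (Opadd A A') B x y = Cadd (Opmul N A B x y) (Opmul N A' B x y).
Proof. unfold Opmul, Opadd. rewrite <- Csum_add. apply Csum_ext; intros; ring. Qed.

Lemma Opmul_add_r (N : nat) (A B B' : Op) (x y : nat) :
  Opmul N A (Opadd B B') x y = Cadd (Opmul N A B x y) (Opmul N A B' x y).
Proof. unfold Opmul, Opadd. rewrite <- Csum_add. apply Csum_ext; intros; ring. Qed.

Lemma Opmul_scale_l (N : nat) (c : C) (A B : Op) (x y : nat) :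
  Opmul N (Opscale c A) B x y = Cmul c (Opmul N A B x y).
Proof. unfold Opmul, Opscale. rewrite <- Csum_scal. apply Csum_ext; intros; ring. Qed.

Lemma Opmul_scale_r (N : nat) (c : C) (A B : Op) (x y : nat) :
  Opmul N A (Opscale c B) x y = Cmul c (Opmul N A B x y).
Proof. unfold Opmul, Opscale. rewrite <- Csum_scal. apply Csum_ext; intros; ring. Qed.

Lemma Opmul_sum_l (N L : nat) (F : nat -> Op) (B : Op) (x y : nat) :
  Opmul N (Opsum L F) B x y = Csum L (fun a => Opmul N (F a) B x y).
Proof.
  induction L as [|L IH]; cbn [Opsum Csum].
  - unfold Opmul, Opzero. apply Csum_zero. intros; ring.
  - rewrite Opmul_add_l, IH. reflexivity.
Qed.

Lemma Opmul_sum_r (N L : nat) (F : nat -> Op) (A : Op) (x y : nat) :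
  Opmul N A (Opsum L F) x y = Csum L (fun a => Opmul N A (F a) x y).
Proof.
  induction L as [|L IH]; cbn [Opsum Csum].
  - unfold Opmul, Opzero. apply Csum_zero. intros; ring.
  - rewrite Opmul_add_r, IH. reflexivity.
Qed.

Lemma Opmul_ext (N : nat) (A A' B B' : Op) (x y : nat) :
  (forall u v, (u < 2^N)%nat -> (v < 2^N)%nat -> A u v = A' u v) ->
  (forall u v, (u < 2^N)%nat -> (v < 2^N)%nat -> B u v = B' u v) ->
  (x < 2^N)%nat -> (y < 2^N)%nat -> Opmul N A B x y = Opmul N A' B' x y.
Proof. intros HA HB Hx Hy. unfold Opmul. apply Csum_ext. intros. rewrite HA, HB; auto. Qed.

Local Notation bit := Nat.testbit.

(* [flip_bit i x] is the basis label [x] with the spin at site [i+1] flipped. *)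
Definition flip_bit (i x : nat) : nat := Nat.lxor x (2 ^ i).

Lemma bit_flip (i x k : nat) : bit (flip_bit i x) k = xorb (bit x k) (Nat.eqb i k).
Proof. unfold flip_bit. rewrite Nat.lxor_spec, Nat.pow2_bits_eqb. reflexivity. Qed.

Lemma bit_flip_same (i x : nat) : bit (flip_bit i x) i = negb (bit x i).
Proof. rewrite bit_flip, Nat.eqb_refl, xorb_true_r. reflexivity. Qed.

Lemma bit_flip_other (i x k : nat) : k <> i -> bit (flip_bit i x) k = bit x k.
Proof.
  intros Hk. rewrite bit_flip. replace (Nat.eqb i k) with false by (symmetry; apply Nat.eqb_neq; lia).
  apply xorb_false_r.
Qed.

Lemma bit_high (N x k : nat) : (x < 2^N)%nat -> (N <= k)%nat -> bit x k = false.
Proof.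
  intros. rewrite <- (Nat.mod_small x (2^N)) by auto. apply Nat.mod_pow2_bits_high; auto.
Qed.

Lemma lt_pow2_of_bits (N x : nat) :
  (forall k, (N <= k)%nat -> bit x k = false) -> (x < 2^N)%nat.
Proof.
  intros Hhigh. replace x with (x mod 2^N).
  - apply Nat.mod_upper_bound, Nat.pow_nonzero. lia.
  - apply Nat.bits_inj. intro k. destruct (Nat.lt_ge_cases k N).
    + rewrite Nat.mod_pow2_bits_low; auto.
    + rewrite Nat.mod_pow2_bits_high, Hhigh; auto.
Qed.

Lemma eq_of_low_bits (N x y : nat) : (x < 2^N)%nat -> (y < 2^N)%nat ->
  (forall k, (k < N)%nat -> bit x k = bit y k) -> x = y.
Proof.
  intros Hx Hy Hxy. apply Nat.bits_inj. intro k. destruct (Nat.lt_ge_cases k N); auto.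
  rewrite (bit_high N x), (bit_high N y); auto.
Qed.

Lemma flip_bit_lt (N i x : nat) : (i < N)%nat -> (x < 2^N)%nat -> (flip_bit i x < 2^N)%nat.
Proof.
  intros Hi Hx. apply lt_pow2_of_bits. intros k Hk.
  rewrite bit_flip_other by lia. apply (bit_high N); auto.
Qed.

Lemma flip_bit_involutive (i x : nat) : flip_bit i (flip_bit i x) = x.
Proof. apply Nat.bits_inj. intro k. rewrite !bit_flip. destruct (bit x k), (Nat.eqb i k); reflexivity. Qed.

Lemma flip_bit_comm (i j x : nat) : flip_bit i (flip_bit j x) = flip_bit j (flip_bit i x).
Proof.
  apply Nat.bits_inj. intro k. rewrite !bit_flip.
  destruct (bit x k), (Nat.eqb i k), (Nat.eqb j k); reflexivity.
Qed.

Definition monomial (p : nat -> nat) (a : nat -> C) : Op :=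
  fun x y => if Nat.eqb y (p x) then a x else C0.

Definition is_monomial (N : nat) (A : Op) (p : nat -> nat) (a : nat -> C) : Prop :=
  (forall x, (x < 2^N)%nat -> (p x < 2^N)%nat) /\
  (forall x y, (x < 2^N)%nat -> (y < 2^N)%nat -> A x y = monomial p a x y).

Lemma Opmul_monomial_l (N : nat) (p : nat -> nat) (a : nat -> C) (B : Op) (x y : nat) :
  (p x < 2^N)%nat -> Opmul N (monomial p a) B x y = Cmul (a x) (B (p x) y).
Proof.
  intros Hp. unfold Opmul, monomial. rewrite (Csum_single _ _ (p x)); auto.
  - rewrite Nat.eqb_refl. reflexivity.
  - intros k _ Hne. rewrite (proj2 (Nat.eqb_neq _ _) Hne). ring.
Qed.

Lemma is_monomial_mul (N : nat) (A B : Op) (p q : nat -> nat) (a b : nat -> C) :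
  is_monomial N A p a -> is_monomial N B q b ->
  is_monomial N (Opmul N A B) (fun x => q (p x)) (fun x => Cmul (a x) (b (p x))).
Proof.
  intros [Hp HA] [Hq HB]. split; auto. intros x y Hx Hy.
  transitivity (Opmul N (monomial p a) B x y).
  { unfold Opmul. apply Csum_ext. intros k Hk. rewrite HA; auto. }
  rewrite Opmul_monomial_l, HB by auto. unfold monomial.
  destruct (Nat.eqb y (q (p x))); ring.
Qed.

Lemma is_monomial_scale (N : nat) (c : C) (A : Op) (p : nat -> nat) (a : nat -> C) :
  is_monomial N A p a -> is_monomial N (Opscale c A) p (fun x => Cmul c (a x)).
Proof.
  intros [Hp HA]. split; auto. intros x y Hx Hy. unfold Opscale, monomial.
  rewrite HA by auto. unfold monomial. destruct (Nat.eqb y (p x)); ring.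
Qed.

Lemma is_monomial_add (N : nat) (A B : Op) (p : nat -> nat) (a b : nat -> C) :
  is_monomial N A p a -> is_monomial N B p b ->
  is_monomial N (Opadd A B) p (fun x => Cadd (a x) (b x)).
Proof.
  intros [Hp HA] [_ HB]. split; auto. intros x y Hx Hy. unfold Opadd.
  rewrite HA, HB by auto. unfold monomial. destruct (Nat.eqb y (p x)); ring.
Qed.

Lemma is_monomial_sub (N : nat) (A B : Op) (p : nat -> nat) (a b : nat -> C) :
  is_monomial N A p a -> is_monomial N B p b ->
  is_monomial N (Opsub A B) p (fun x => Csub (a x) (b x)).
Proof.
  intros [Hp HA] [_ HB]. split; auto. intros x y Hx Hy. unfold Opsub.
  rewrite HA, HB by auto. unfold monomial, Csub. destruct (Nat.eqb y (p x)); ring.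
Qed.

Lemma is_monomial_ext (N : nat) (A : Op) (p p' : nat -> nat) (a a' : nat -> C) :
  is_monomial N A p a ->
  (forall x, (x < 2^N)%nat -> p x = p' x) ->
  (forall x, (x < 2^N)%nat -> a x = a' x) -> is_monomial N A p' a'.
Proof.
  intros [Hp HA] Ep Ea. split.
  - intros x Hx. rewrite <- Ep; auto.
  - intros x y Hx Hy. rewrite HA by auto. unfold monomial. rewrite Ep, Ea by auto. reflexivity.
Qed.

Lemma monomial_commute (N : nat) (p q : nat -> nat) (a b : nat -> C) (x y : nat) :
  (p x < 2^N)%nat -> (q x < 2^N)%nat ->
  q (p x) = p (q x) -> b (p x) = b x -> a (q x) = a x ->
  Opmul N (monomial p a) (monomial q b) x y = Opmul N (monomial q b) (monomial p a) x y.
Proof.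
  intros Hp Hq Epq Eb Ea. rewrite !Opmul_monomial_l by auto. unfold monomial.
  rewrite Epq, Eb, Ea. destruct (Nat.eqb y (p (q x))); ring.
Qed.

Lemma Opid_monomial (N : nat) : is_monomial N Opid (fun x => x) (fun _ => C1).
Proof. split; auto. intros x y _ _. unfold Opid, monomial. rewrite Nat.eqb_sym. reflexivity. Qed.

Lemma agree_off_spec (N i x y : nat) : agree_off N (S i) x y = true <->
  (forall k, (k < N)%nat -> k <> i -> bit x k = bit y k).
Proof.
  unfold agree_off. replace (S i - 1)%nat with i by lia. rewrite forallb_forall. split.
  - intros H k Hk Hne. specialize (H k). rewrite in_seq in H.
    destruct (proj1 (orb_true_iff _ _) (H ltac:(lia))) as [Hki|Hxy].
    + apply Nat.eqb_eq in Hki. lia.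
    + apply Bool.eqb_prop. exact Hxy.
  - intros H k Hk. rewrite in_seq in Hk. apply orb_true_iff.
    destruct (Nat.eq_dec k i) as [->|Hne].
    + left. apply Nat.eqb_refl.
    + right. rewrite H by lia. apply Bool.eqb_reflx.
Qed.

Lemma agree_off_refl (N i x : nat) : agree_off N (S i) x x = true.
Proof. apply agree_off_spec. reflexivity. Qed.

Lemma agree_off_flip (N i x : nat) : agree_off N (S i) x (flip_bit i x) = true.
Proof. apply agree_off_spec. intros k _ Hk. rewrite bit_flip_other; auto. Qed.

Lemma agree_off_same_bit (N i x y : nat) : (x < 2^N)%nat -> (y < 2^N)%nat ->
  agree_off N (S i) x y = true -> bit x i = bit y i -> x = y.
Proof.
  intros Hx Hy Hagree Hi. apply (eq_of_low_bits N); auto. intros k Hk.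
  destruct (Nat.eq_dec k i) as [->|Hne]; auto. apply agree_off_spec with (N := N) (i := i); auto.
Qed.

Lemma agree_off_other_bit (N i x y : nat) : (i < N)%nat -> (x < 2^N)%nat -> (y < 2^N)%nat ->
  agree_off N (S i) x y = true -> bit x i <> bit y i -> y = flip_bit i x.
Proof.
  intros HiN Hx Hy Hagree Hi. apply (eq_of_low_bits N); auto using flip_bit_lt. intros k Hk.
  destruct (Nat.eq_dec k i) as [->|Hne].
  - rewrite bit_flip_same. destruct (bit x i), (bit y i); cbn; congruence.
  - rewrite bit_flip_other by auto. symmetry. apply agree_off_spec with (N := N) (i := i); auto.
Qed.

Lemma site_diagonal (N i : nat) (M : Mat2) : M true false = C0 -> M false true = C0 ->
  is_monomial N (site N (S i) M) (fun x => x) (fun x => M (bit x i) (bit x i)).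
Proof.
  intros Hoff1 Hoff2. split; auto. intros x y Hx Hy. unfold site, monomial.
  replace (S i - 1)%nat with i by lia.
  destruct (agree_off N (S i) x y) eqn:Hagree.
  - destruct (bool_dec (bit x i) (bit y i)) as [Hsame|Hdiff].
    + rewrite <- (agree_off_same_bit N i x y), Nat.eqb_refl by auto. reflexivity.
    + destruct (Nat.eqb_spec y x) as [->|_]; [congruence|].
      destruct (bit x i), (bit y i); auto; congruence.
  - destruct (Nat.eqb_spec y x) as [->|_]; [|reflexivity].
    rewrite agree_off_refl in Hagree. discriminate.
Qed.

Lemma site_offdiagonal (N i : nat) (M : Mat2) : (i < N)%nat ->
  M true true = C0 -> M false false = C0 ->
  is_monomial N (site N (S i) M) (flip_bit i) (fun x => M (bit x i) (negb (bit x i))).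
Proof.
  intros HiN Hdiag1 Hdiag2. split; [intros; apply flip_bit_lt; auto|].
  intros x y Hx Hy. unfold site, monomial. replace (S i - 1)%nat with i by lia.
  destruct (agree_off N (S i) x y) eqn:Hagree.
  - destruct (bool_dec (bit x i) (bit y i)) as [Hsame|Hdiff].
    + destruct (Nat.eqb_spec y (flip_bit i x)) as [->|_].
      * rewrite bit_flip_same in Hsame. destruct (bit x i); discriminate.
      * rewrite <- Hsame. destruct (bit x i); auto.
    + rewrite (agree_off_other_bit N i x y), Nat.eqb_refl, bit_flip_same by auto. reflexivity.
  - destruct (Nat.eqb_spec y (flip_bit i x)) as [->|_]; [|reflexivity].
    rewrite agree_off_flip in Hagree. discriminate.
Qed.

Fixpoint string_coef (M : Mat2) (k x : nat) : C :=
  match k with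
  | O => C1
  | S k' => Cmul (string_coef M k' x) (M (bit x k') (bit x k'))
  end.

Lemma prod_sites_monomial (N k : nat) (M : Mat2) :
  M true false = C0 -> M false true = C0 ->
  is_monomial N (prod_sites N M k) (fun x => x) (string_coef M k).
Proof.
  intros Hoff1 Hoff2. induction k as [|k IH]; cbn [prod_sites].
  - apply Opid_monomial.
  - exact (is_monomial_mul N _ _ _ _ _ _ IH (site_diagonal N k M Hoff1 Hoff2)).
Qed.

Lemma string_coef_low (M : Mat2) (k x x' : nat) :
  (forall i, (i < k)%nat -> bit x i = bit x' i) -> string_coef M k x = string_coef M k x'.
Proof.
  induction k as [|k IH]; intros Hlow; cbn [string_coef]; auto.
  rewrite IH, Hlow; auto.
Qed.

Lemma i_pow_sz_diag (b : bool) : i_pow_sz b b = if b then Copp Ci else Ci.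
Proof. destruct b; reflexivity. Qed.

Lemma i_pow_msz_diag (b : bool) : i_pow_msz b b = if b then Ci else Copp Ci.
Proof. destruct b; reflexivity. Qed.

Lemma string_coef_inverse (k x : nat) :
  Cmul (string_coef i_pow_msz k x) (string_coef i_pow_sz k x) = C1.
Proof.
  induction k as [|k IH]; cbn [string_coef]; [ring|].
  transitivity (Cmul (Cmul (string_coef i_pow_msz k x) (string_coef i_pow_sz k x))
                     (Cmul (i_pow_msz (bit x k) (bit x k)) (i_pow_sz (bit x k) (bit x k)))); [ring|].
  rewrite IH, i_pow_msz_diag, i_pow_sz_diag. destruct (bit x k); ring [Ci_squared].
Qed.

Definition cdag_coef (i x : nat) : C :=
  Cmul (Cpow Ci i) (Cmul (string_coef i_pow_sz i x) (if bit x i then C0 else C1)).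
Definition cann_coef (i x : nat) : C :=
  Cmul (Cpow (Copp Ci) i) (Cmul (string_coef i_pow_msz i x) (if bit x i then C1 else C0)).

Lemma cdag_monomial (N i : nat) : (i < N)%nat ->
  is_monomial N (cdag N (S i)) (flip_bit i) (cdag_coef i).
Proof.
  intros HiN. unfold cdag. replace (S i - 1)%nat with i by lia.
  eapply is_monomial_ext.
  - apply is_monomial_scale, is_monomial_mul;
      [apply prod_sites_monomial | apply site_offdiagonal]; auto.
  - reflexivity.
  - intros x _. unfold cdag_coef, sigma_plus. destruct (bit x i); reflexivity.
Qed.

Lemma cann_monomial (N i : nat) : (i < N)%nat ->
  is_monomial N (cann N (S i)) (flip_bit i) (cann_coef i).
Proof.
  intros HiN. unfold cann. replace (S i - 1)%nat with i by lia.
  eapply is_monomial_ext.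
  - apply is_monomial_scale, is_monomial_mul;
      [apply prod_sites_monomial | apply site_offdiagonal]; auto.
  - reflexivity.
  - intros x _. unfold cann_coef, sigma_minus. destruct (bit x i); reflexivity.
Qed.

Lemma number_monomial (N i : nat) : (i < N)%nat ->
  is_monomial N (Opmul N (cdag N (S i)) (cann N (S i))) (fun x => x)
    (fun x => if bit x i then C0 else C1).
Proof.
  intros HiN. eapply is_monomial_ext.
  - apply is_monomial_mul; [apply cdag_monomial | apply cann_monomial]; auto.
  - intros x _. apply flip_bit_involutive.
  - intros x _. unfold cdag_coef, cann_coef.
    rewrite (string_coef_low _ i (flip_bit i x) x) by (intros; apply bit_flip_other; lia).
    rewrite bit_flip_same.
    destruct (bit x i); cbn [negb]; ring [(Ci_pow_inverse i) (string_coef_inverse i x)].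
Qed.

Definition flip_bond (i x : nat) : nat := flip_bit (S i) (flip_bit i x).

Lemma hop_left_monomial (N i : nat) : (S i < N)%nat ->
  is_monomial N (Opmul N (cann N (S i)) (cdag N (S (S i)))) (flip_bond i)
    (fun x => if bit x i && negb (bit x (S i)) then Copp C1 else C0).
Proof.
  intros HiN. eapply is_monomial_ext.
  - apply is_monomial_mul; [apply cann_monomial | apply cdag_monomial]; lia.
  - reflexivity.
  - intros x _. unfold cann_coef, cdag_coef. cbn [Cpow string_coef].
    rewrite (string_coef_low _ i (flip_bit i x) x) by (intros; apply bit_flip_other; lia).
    rewrite bit_flip_same, (bit_flip_other i x (S i)) by lia.
    rewrite i_pow_sz_diag. destruct (bit x i), (bit x (S i)); cbn [negb andb];
      ring [(Ci_pow_inverse i) (string_coef_inverse i x) Ci_squared].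
Qed.

Lemma hop_right_monomial (N i : nat) : (S i < N)%nat ->
  is_monomial N (Opmul N (cann N (S (S i))) (cdag N (S i))) (flip_bond i)
    (fun x => if negb (bit x i) && bit x (S i) then Copp C1 else C0).
Proof.
  intros HiN. eapply is_monomial_ext.
  - apply is_monomial_mul; [apply cann_monomial | apply cdag_monomial]; lia.
  - intros x _. apply flip_bit_comm.
  - intros x _. unfold cann_coef, cdag_coef. cbn [Cpow string_coef].
    rewrite (string_coef_low _ i (flip_bit (S i) x) x) by (intros; apply bit_flip_other; lia).
    rewrite (bit_flip_other (S i) x i) by lia.
    rewrite i_pow_msz_diag. destruct (bit x i), (bit x (S i)); cbn [negb andb];
      ring [(Ci_pow_inverse i) (string_coef_inverse i x) Ci_squared].
Qed.

Definition hop_coef (i x : nat) : C :=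
  if xorb (bit x i) (bit x (S i)) then Copp C1 else C0.
Definition density_coef (i x : nat) : C :=
  Cmul Ci (Csub (if bit x i then C0 else C1) (if bit x (S i) then C0 else C1)).

Lemma e_op_decomposition (N i x y : nat) :
  (S i < N)%nat -> (x < 2^N)%nat -> (y < 2^N)%nat ->
  e_op N (S i) x y =
  Cadd (monomial (flip_bond i) (hop_coef i) x y) (monomial (fun z => z) (density_coef i) x y).
Proof.
  intros HiN Hx Hy. unfold e_op. replace (S i + 1)%nat with (S (S i)) by lia.
  assert (Hhop : is_monomial N (Opadd (Opmul N (cann N (S i)) (cdag N (S (S i))))
                                      (Opmul N (cann N (S (S i))) (cdag N (S i))))
                   (flip_bond i) (hop_coef i)).
  { eapply is_monomial_ext.
    - apply is_monomial_add; [apply hop_left_monomial | apply hop_right_monomial]; auto.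
    - reflexivity.
    - intros z _. unfold hop_coef. destruct (bit z i), (bit z (S i)); cbn; ring. }
  assert (Hdensity := is_monomial_scale N Ci _ _ _
    (is_monomial_sub N _ _ _ _ _ (number_monomial N i ltac:(lia))
                                 (number_monomial N (S i) HiN))).
  unfold Opadd at 1. rewrite (proj2 Hhop), (proj2 Hdensity) by auto. reflexivity.
Qed.

Lemma flip_bond_lt (N i x : nat) : (S i < N)%nat -> (x < 2^N)%nat -> (flip_bond i x < 2^N)%nat.
Proof. intros. unfold flip_bond. apply flip_bit_lt; auto. apply flip_bit_lt; auto; lia. Qed.

Lemma bit_flip_bond_other (i x k : nat) : k <> i -> k <> S i -> bit (flip_bond i x) k = bit x k.
Proof. intros. unfold flip_bond. rewrite !bit_flip_other; auto. Qed.

Lemma flip_bond_comm (a b x : nat) : flip_bond a (flip_bond b x) = flip_bond b (flip_bond a x).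
Proof. unfold flip_bond. rewrite !(flip_bit_comm _ (S b)), !(flip_bit_comm _ b). reflexivity. Qed.

(* Locality: bond operators whose bonds are disjoint commute, because each one
   only flips and reads the two spins of its own bond. *)
Lemma e_op_far_commute (N a b x y : nat) :
  (a + 2 <= b)%nat -> (S b < N)%nat -> (x < 2^N)%nat -> (y < 2^N)%nat ->
  Opmul N (e_op N (S a)) (e_op N (S b)) x y = Opmul N (e_op N (S b)) (e_op N (S a)) x y.
Proof.
  intros Hab HbN Hx Hy.
  assert (Hdecomp : forall i, (S i < N)%nat -> forall u v, (u < 2^N)%nat -> (v < 2^N)%nat ->
    e_op N (S i) u v =
    Opadd (monomial (flip_bond i) (hop_coef i)) (monomial (fun z => z) (density_coef i)) u v)
    by (intros; apply e_op_decomposition; auto).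
  rewrite (Opmul_ext N _ _ _ _ x y (Hdecomp a ltac:(lia)) (Hdecomp b HbN)) by auto.
  rewrite (Opmul_ext N _ _ _ _ x y (Hdecomp b HbN) (Hdecomp a ltac:(lia))) by auto.
  assert (Ha_local : forall z, hop_coef a (flip_bond b z) = hop_coef a z /\
                               density_coef a (flip_bond b z) = density_coef a z).
  { intros z. unfold hop_coef, density_coef. rewrite !bit_flip_bond_other by lia. auto. }
  assert (Hb_local : forall z, hop_coef b (flip_bond a z) = hop_coef b z /\
                               density_coef b (flip_bond a z) = density_coef b z).
  { intros z. unfold hop_coef, density_coef. rewrite !bit_flip_bond_other by lia. auto. }
  assert (Hxa : (flip_bond a x < 2^N)%nat) by (apply flip_bond_lt; auto; lia).
  assert (Hxb : (flip_bond b x < 2^N)%nat) by (apply flip_bond_lt; auto).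
  rewrite !Opmul_add_l, !Opmul_add_r.
  rewrite (monomial_commute N (flip_bond a) (flip_bond b)),
    (monomial_commute N (flip_bond a) (fun z => z)),
    (monomial_commute N (fun z => z) (flip_bond b)),
    (monomial_commute N (fun z => z) (fun z => z));
    auto; try apply flip_bond_comm; try apply Ha_local; try apply Hb_local.
  ring.
Qed.

Lemma antisymmetric_band_sum (L : nat) (f g : nat -> C) (K : nat -> nat -> C) :
  (forall a, (a < L)%nat -> K a a = C0) ->
  (forall a b, (a < L)%nat -> (b < L)%nat -> K b a = Copp (K a b)) ->
  (forall a b, (a < L)%nat -> (b < L)%nat -> (a + 2 <= b)%nat -> K a b = C0) ->
  Csum L (fun a => Csum L (fun b => Cmul (Cmul (f a) (g b)) (K a b))) =
  Csum (pred L) (fun a =>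
    Cmul (Csub (Cmul (f a) (g (S a))) (Cmul (f (S a)) (g a))) (K a (S a))).
Proof.
  induction L as [|L IH]; intros Hdiag Hanti Hband; [reflexivity|].
  cbn [Csum]. rewrite Csum_add, IH by (intros; auto; lia).
  destruct L as [|L].
  - cbn [Csum pred]. rewrite Hdiag by lia. ring.
  - rewrite (Csum_single (S L) (fun a => Cmul (Cmul (f a) (g (S L))) (K a (S L))) L)
      by (lia || (intros; rewrite Hband by lia; ring)).
    rewrite (Csum_single (S L) (fun b => Cmul (Cmul (f (S L)) (g b)) (K (S L) b)) L)
      by (lia || (intros b Hb Hne; rewrite (Hanti b (S L)), Hband by lia; ring)).
    rewrite (Hdiag (S L)), (Hanti L (S L)) by lia. cbn [pred Csum]. unfold Csub. ring.
Qed.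

Definition cf (N : nat) (n : Z) (a : nat) : R := cos (PI * IZR n * INR (S a) / INR N).

Definition band_coef (N : nat) (n m : Z) (a : nat) : R :=
  cf N n a * cf N m (S a) - cf N n (S a) * cf N m a.

Lemma H0_product_expand (N : nat) (n m : Z) (x y : nat) :
  Opmul N (H0 N n) (H0 N m) x y =
  Csum (N - 1) (fun a => Csum (N - 1) (fun b =>
    Cmul (RtoC (cf N n a)) (Cmul (RtoC (cf N m b)) (Opmul N (e_op N (S a)) (e_op N (S b)) x y)))).
Proof.
  unfold H0. rewrite Opmul_sum_l. apply Csum_ext. intros a _.
  rewrite Opmul_sum_r. apply Csum_ext. intros b _.
  rewrite Opmul_scale_l, Opmul_scale_r. reflexivity.
Qed.

Lemma H0_comm_expand (N : nat) (n m : Z) (x y : nat) :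
  (2 <= N)%nat -> (x < 2^N)%nat -> (y < 2^N)%nat ->
  comm N (H0 N n) (H0 N m) x y =
  Csum (N - 2) (fun a =>
    Cmul (RtoC (band_coef N n m a)) (comm N (e_op N (S a)) (e_op N (S (S a))) x y)).
Proof.
  intros HN Hx Hy. unfold comm at 1, Opsub. rewrite !H0_product_expand.
  rewrite (Csum_swap (N - 1) (N - 1) (fun a b => Cmul (RtoC (cf N m a))
             (Cmul (RtoC (cf N n b)) (Opmul N (e_op N (S a)) (e_op N (S b)) x y)))).
  rewrite Csum_opp, <- Csum_add.
  rewrite (Csum_ext _ _ (fun a => Csum (N - 1) (fun b =>
             Cmul (Cmul (RtoC (cf N n a)) (RtoC (cf N m b)))
                  (comm N (e_op N (S a)) (e_op N (S b)) x y)))).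
  2:{ intros a _. rewrite Csum_opp, <- Csum_add. apply Csum_ext. intros b _.
      unfold comm, Opsub. ring. }
  rewrite antisymmetric_band_sum.
  - replace (pred (N - 1)) with (N - 2)%nat by lia. apply Csum_ext. intros a _.
    f_equal. unfold band_coef.
    apply C_ext; unfold Csub, Cmul, Cadd, Copp, RtoC; simpl; ring.
  - intros. unfold comm, Opsub. ring.
  - intros. unfold comm, Opsub. ring.
  - intros. unfold comm, Opsub. rewrite e_op_far_commute by (auto; lia). ring.
Qed.

Lemma cos_step (X Y : R) : cos (X + 2 * Y) - cos X = -2 * sin (X + Y) * sin Y.
Proof.
  replace (X + 2 * Y) with ((X + Y) + Y) by ring.
  replace X with ((X + Y) - Y) at 2 by ring.
  rewrite cos_plus, cos_minus. ring.
Qed.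

Lemma cos_product_difference (A B p q : R) :
  cos A * cos (B + 2 * q) - cos (A + 2 * p) * cos B =
  sin (p - q) * sin (A + B + (p + q)) + sin (p + q) * sin (A - B + (p - q)).
Proof.
  set (U := A + p). set (V := B + q).
  replace A with (U - p) by (unfold U; ring). replace B with (V - q) by (unfold V; ring).
  replace (V - q + 2 * q) with (V + q) by ring. replace (U - p + 2 * p) with (U + p) by ring.
  replace (U - p + (V - q) + (p + q)) with (U + V) by ring.
  replace (U - p - (V - q) + (p - q)) with (U - V) by ring.
  rewrite !sin_plus, !sin_minus, !cos_plus, !cos_minus. ring.
Qed.

(* The neighbouring-bond coefficient written with half angles [p], [q] at
   bond number [J]. *)
Definition bracket (J p q : R) : R :=
  cos (2 * J * p) * cos (2 * (J + 1) * q) - cos (2 * (J + 1) * p) * cos (2 * J * q).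

Lemma bracket_decomposition (J p q : R) : sin (p + q) <> 0 -> sin (p - q) <> 0 ->
  bracket J p q =
  2 * sin (p - q) * (- / (4 * sin (p + q))) * bracket J 0 (p + q) +
  2 * sin (p + q) * (- / (4 * sin (p - q))) * bracket J 0 (p - q).
Proof.
  intros Hplus Hminus. unfold bracket.
  assert (Hshift : forall t, 2 * (J + 1) * t = 2 * J * t + 2 * t) by (intro; ring).
  rewrite !Hshift, !Rmult_0_r, !Rplus_0_r, cos_0, !Rmult_1_l.
  replace (2 * J * (p + q)) with (2 * J * p + 2 * J * q) by ring.
  replace (2 * J * (p - q)) with (2 * J * p - 2 * J * q) by ring.
  rewrite cos_product_difference, !cos_step. field. split; assumption.
Qed.

Definition half_angle (N : nat) (k : Z) : R := PI * IZR k / (2 * INR N).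

Lemma cf_half_angle (N : nat) (k : Z) (a : nat) :
  INR N <> 0 -> cf N k a = cos (2 * INR (S a) * half_angle N k).
Proof. intros HN. unfold cf, half_angle. f_equal. field. exact HN. Qed.

Lemma band_coef_bracket (N : nat) (n m : Z) (a : nat) : INR N <> 0 ->
  band_coef N n m a = bracket (INR (S a)) (half_angle N n) (half_angle N m).
Proof.
  intros HN. unfold band_coef, bracket. rewrite !cf_half_angle by exact HN.
  rewrite (S_INR (S a)). reflexivity.
Qed.

Lemma half_angle_add (N : nat) (n m : Z) :
  half_angle N (n + m) = half_angle N n + half_angle N m.
Proof. unfold half_angle, Rdiv. rewrite plus_IZR. ring. Qed.

Lemma half_angle_sub (N : nat) (n m : Z) :
  half_angle N (n - m) = half_angle N n - half_angle N m.
Proof. unfold half_angle, Rdiv. rewrite minus_IZR. ring. Qed.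

Lemma half_angle_0 (N : nat) : half_angle N 0 = 0.
Proof. unfold half_angle, Rdiv. ring. Qed.

Lemma sin_half_angle_neq0 (N : nat) (k : Z) : (1 <= N)%nat ->
  ~ (2 * Z.of_nat N | k)%Z -> sin (half_angle N k) <> 0.
Proof.
  intros HN Hndiv Hsin. apply sin_eq_0_0 in Hsin. destruct Hsin as [j Hj]. apply Hndiv. exists j.
  assert (HNr : INR N <> 0) by (apply not_0_INR; lia).
  assert (Hk : IZR k = IZR j * (2 * INR N)).
  { apply (Rmult_eq_reg_r (PI / (2 * INR N))).
    - replace (IZR k * (PI / (2 * INR N))) with (half_angle N k)
        by (unfold half_angle; field; exact HNr).
      rewrite Hj. field. exact HNr.
    - apply Rmult_integral_contrapositive; split; [apply PI_neq0|].
      apply Rinv_neq_0_compat. lra. }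
  apply eq_IZR. rewrite Hk, mult_IZR, mult_IZR, <- INR_IZR_INZ. reflexivity.
Qed.

Lemma band_coef_decomposition (N : nat) (n m : Z) (a : nat) : (1 <= N)%nat ->
  ~ (2 * Z.of_nat N | n + m)%Z -> ~ (2 * Z.of_nat N | n - m)%Z ->
  band_coef N n m a =
  2 * sin (half_angle N (n - m)) * (- / (4 * sin (half_angle N (n + m)))) * band_coef N 0 (n + m) a +
  2 * sin (half_angle N (n + m)) * (- / (4 * sin (half_angle N (n - m)))) * band_coef N 0 (n - m) a.
Proof.
  intros HN Hplus Hminus.
  assert (HNr : INR N <> 0) by (apply not_0_INR; lia).
  pose proof (sin_half_angle_neq0 N (n + m) HN Hplus) as Hsin_plus.
  pose proof (sin_half_angle_neq0 N (n - m) HN Hminus) as Hsin_minus.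
  rewrite !band_coef_bracket by exact HNr.
  rewrite half_angle_add, half_angle_sub, half_angle_0 in *.
  apply bracket_decomposition; assumption.
Qed.

Theorem mainTheorem5 (N : nat) (HN : (2 <= N)%nat) (n m : Z)
  (Hp : ~ (2 * Z.of_nat N | n + m)%Z) (Hm : ~ (2 * Z.of_nat N | n - m)%Z)
  (x y : nat) (Hx : (x < 2 ^ N)%nat) (Hy : (y < 2 ^ N)%nat) :
  comm N (H0 N n) (H0 N m) x y =
  Opadd (Opscale (RtoC (2 * sin (PI * IZR (n - m) / (2 * INR N)))) (H1 N (n + m)))
        (Opscale (RtoC (2 * sin (PI * IZR (n + m) / (2 * INR N)))) (H1 N (n - m)))
        x y.
Proof.
  unfold H1, Opadd, Opscale. rewrite !H0_comm_expand by assumption.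
  rewrite <- !Csum_scal, <- Csum_add. apply Csum_ext. intros a _.
  fold (half_angle N (n - m)) (half_angle N (n + m)).
  rewrite (band_coef_decomposition N n m a) by (assumption || lia).
  rewrite RtoC_plus, !RtoC_mult. ring.
Qed.
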